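(* Let $r\geq 11$. Let $G_1=K_4\,\square\, K_4$ be the $4\times 4$ lattice (rook's) graph $L_2(4)$, and let $G_2$ be the Shrikhande graph. Then $Z_{+}(G_1\,\square\, K_r)\neq Z_{+}(G_2\,\square\, K_r)$.
   Context: $K_r$ is the complete graph on $r$ vertices. The Cartesian product $G\,\square\, G'$ has vertex set $V(G)\times V(G')$, with $(g,g')$ adjacent to $(h,h')$ if and only if either $g=h$ and $\{g',h'\}\in E(G')$, or $g'=h'$ and $\{g,h\}\in E(G)$. The Shrikhande graph is the graph with vertex set $\mathbb{Z}_4\times\mathbb{Z}_4$ in which $x$ and $y$ are adjacent if and only if $x-y\in\{\pm(1,0),\pm(0,1),\pm(1,1)\}$; it is obtained from $L_2(4)$ by Seidel switching with respect to a coclique of size 4, and is cospectral with but not isomorphic to $L_2(4)$. The positive semidefinite zero forcing number $Z_{+}(G)$ is the minimum size of a set $S\subseteq V(G)$ such that, coloring $S$ blue and all other vertices white, repeated application of the following rule makes all vertices blue: a white vertex $v$ becomes blue if it is a neighbor of a blue vertex $u$ and no other white neighbor of $u$ is connected to $v$ by a path all of whose vertices are white. *)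

From mathcomp Require Import all_boot all_order all_algebra.
Set Implicit Arguments. Unset Strict Implicit. Unset Printing Implicit Defensive.
Import GRing.Theory.

(* A simple graph on a finite type is a (symmetric, irreflexive) relation. *)

Definition complete_graph (n : nat) : rel 'I_n := fun i j => i != j.
Arguments complete_graph n : clear implicits.

Definition cart_prod (T1 T2 : finType) (e1 : rel T1) (e2 : rel T2) : rel (T1 * T2) :=
  fun x y => ((x.1 == y.1) && e2 x.2 y.2) || ((x.2 == y.2) && e1 x.1 y.1).

Definition rook44 : rel ('I_4 * 'I_4) := cart_prod (complete_graph 4) (complete_graph 4).

Definition shrikhande : rel ('Z_4 * 'Z_4) := fun x y =>
  (x.1 - y.1, x.2 - y.2)%R \in
    [:: (1, 0); (-1, 0); (0, 1); (0, -1); (1, 1); (-1, -1)]%R.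

Definition white_rel (T : finType) (e : rel T) (B : {set T}) : rel T :=
  fun x y => [&& e x y, x \notin B & y \notin B].

Definition psd_force (T : finType) (e : rel T) (B : {set T}) (v : T) : bool :=
  (v \notin B) &&
  [exists u, [&& u \in B, e u v &
     [forall w, [&& w \notin B, e u w & w != v] ==>
                   ~~ connect (white_rel e B) w v]]].

Inductive psd_derives (T : finType) (e : rel T) : {set T} -> Prop :=
| psd_done B : B = [set: T] -> psd_derives e B
| psd_step B v : psd_force e B v -> psd_derives e (v |: B) -> psd_derives e B.

Definition psd_forcing_set (T : finType) (e : rel T) (S : {set T}) : Prop :=
  psd_derives e S.

Definition is_Zplus (T : finType) (e : rel T) (k : nat) : Prop :=
  (exists S : {set T}, psd_forcing_set e S /\ #|S| = k) /\
  (forall S : {set T}, psd_forcing_set e S -> k <= #|S|).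

(* Let every vertex set of G with more than m vertices be PSD
   forcing, and let every m-set either be forcing or have each of its vertices
   forced by the others.  Run a forcing process of G □ K_r backwards from the
   full set: each layer i stays a PSD forcing set of G once enlarged by a set
   U_i, and g has to be added to some U_i only when a force along the fibre of
   g makes that fibre entirely blue while g is not redundant over the set I of
   entirely blue fibres.  This can happen at most max(1, m - |I|) more times,
   so sum |U_i| <= max(1, m) and Z_+(G □ K_r) >= Z_+(G) r - m.  For
   G = K_4 □ K_4 one has Z_+ = 10 and m = 12, hence Z_+ >= 10 r - 12.

   If T is PSD forcing in G, the set equal to T in every layer
   but one and to the complement of T in the remaining layer is PSD forcing in
   G □ K_r: each vertex of T in the odd layer is forced along its fibre, the
   white vertices of that layer being cut off from the other layers.  A 9-set
   of the Shrikhande graph gives Z_+ <= 9 (r - 1) + 7 < 10 r - 12 for r >= 11.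

   The facts about the two 16-vertex graphs are checked by computation; a set is
   shown not to be forcing by exhibiting a non-full superset from which no vertex
   can be forced. *)

From mathcomp Require Import all_boot all_order all_algebra.
From mathcomp Require Import zify.
From Stdlib Require Import Classical_Prop.
Set Implicit Arguments. Unset Strict Implicit. Unset Printing Implicit Defensive.

Lemma connect_homo (T1 T2 : finType) (e1 : rel T1) (e2 : rel T2) (f : T1 -> T2) :
  (forall x y, e1 x y -> connect e2 (f x) (f y)) ->
  forall x y, connect e1 x y -> connect e2 (f x) (f y).
Proof.
move=> hf x _ /connectP [p p_path ->]; elim: p x p_path => [|y p IHp] x /=.
  by rewrite connect0.
by case/andP=> /hf x_y /IHp; apply: connect_trans.
Qed.

Section PSDForcing.
Variables (T : finType) (e : rel T).
Implicit Types (A B F : {set T}) (u v w : T).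

Lemma white_rel_sym B : symmetric e -> symmetric (white_rel e B).
Proof. by move=> sym_e x y; rewrite /white_rel sym_e [(x \notin B) && _]andbC. Qed.

Lemma white_connect_subset A B x y :
  A \subset B -> connect (white_rel e B) x y -> connect (white_rel e A) x y.
Proof.
move=> sAB; apply: connect_sub => a b /and3P [e_ab aB bB]; apply: connect1.
by rewrite /white_rel e_ab !(contra (subsetP sAB _)).
Qed.

Lemma psd_force_notin B v : psd_force e B v -> v \notin B.
Proof. by case/andP. Qed.

Lemma psd_force_subset A B v :
  A \subset B -> v \notin B -> psd_force e A v -> psd_force e B v.
Proof.
move=> sAB vB /andP [_ /existsP [u /and3P [uA e_uv /forallP u_forces]]].
apply/andP; split=> //; apply/existsP; exists u.
rewrite (subsetP sAB _ uA) e_uv /=; apply/forallP => w.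
apply/implyP => /and3P [wB e_uw w_v]; have wA := contra (subsetP sAB w) wB.
move: (u_forces w); rewrite wA e_uw w_v /=; apply: contra.
exact: white_connect_subset.
Qed.

Lemma psd_force_closed B u v (C : {set T}) :
  symmetric e -> u \in B -> e u v -> v \notin B -> v \in C ->
  (forall a b, white_rel e B a b -> a \in C -> b \in C) ->
  (forall w, w \notin B -> e u w -> w != v -> w \notin C) -> psd_force e B v.
Proof.
move=> sym_e uB e_uv vB vC C_closed C_avoid; apply/andP; split=> //.
apply/existsP; exists u; rewrite uB e_uv /=; apply/forallP => w.
apply/implyP => /and3P [wB e_uw w_v]; apply: contra (C_avoid w wB e_uw w_v).
have sym_white := sym_connect_sym (white_rel_sym B sym_e).
rewrite sym_white => /(closed_connect (intro_closed sym_white C_closed)) <-.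
exact: vC.
Qed.

Lemma psd_derives_superset A B : A \subset B -> psd_derives e A -> psd_derives e B.
Proof.
move=> sAB dA; elim: dA B sAB => [A' -> | A' v v_forced _ IH] B sAB.
  by apply: psd_done; apply/eqP; rewrite eqEsubset subsetT.
have [vB | vB] := boolP (v \in B); first by apply: IH; rewrite subUset sub1set vB.
by apply: psd_step (psd_force_subset sAB vB v_forced) (IH _ (setUS _ sAB)).
Qed.

Lemma psd_derives_forced A F :
  {in F, forall v, psd_force e A v} -> psd_derives e (A :|: F) -> psd_derives e A.
Proof.
elim: {F}_.+1 {-2}F (ltnSn #|F|) A => // n IH F F_le A F_forced dAF.
have [F0 | [v vF]] := set_0Vmem F; first by rewrite F0 setU0 in dAF.
apply: psd_step (F_forced v vF) _; apply: (IH (F :\ v)).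
- by rewrite -ltnS (leq_trans _ F_le) // (cardsD1 v F) vF.
- move=> w /setD1P [w_v wF]; apply: psd_force_subset (F_forced w wF).
    exact: subsetUr.
  by rewrite in_setU1 negb_or w_v (psd_force_notin (F_forced w wF)).
- by rewrite setUAC setD1K // setUC.
Qed.

Lemma psd_derives_stalled A B :
  psd_derives e A -> A \subset B -> (forall v, ~~ psd_force e B v) -> B = [set: T].
Proof.
move=> dA; elim: dA B => [A' -> | A' v v_forced _ IH] B sAB B_stalled.
  by apply/eqP; rewrite eqEsubset subsetT.
have [vB | vB] := boolP (v \in B); first by apply: IH; rewrite // subUset sub1set vB.
by have := B_stalled v; rewrite (psd_force_subset sAB vB v_forced).
Qed.

End PSDForcing.

Lemma subset_card_extend (T : finType) (A : {set T}) n :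
  #|A| <= n <= #|T| -> exists2 B : {set T}, A \subset B & #|B| = n.
Proof.
elim: n => [|n IH] /andP [A_le n_le]; first by exists A; last by apply/eqP; rewrite -leqn0.
have [A_lt | A_eq] := ltnP #|A| n.+1; last by exists A => //; apply/eqP; rewrite eqn_leq A_le.
have /IH [B sAB cardB] : #|A| <= n <= #|T| by rewrite -ltnS A_lt ltnW.
have /set0Pn [x] : ~: B != set0 by rewrite -card_gt0; move: (cardsC B); lia.
rewrite inE => xB.
by exists (x |: B); [apply: subset_trans sAB (subsetUr _ _) | rewrite cardsU1 xB cardB].
Qed.

Section CartesianProduct.
Variables (G : finType) (eG : rel G) (r : nat).
Local Notation P := (cart_prod eG (complete_graph r)).
Implicit Types (B S : {set G * 'I_r}) (D R : {set G}).

Lemma cart_prod_layer x y i : P (x, i) (y, i) = eG x y.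
Proof. by rewrite /cart_prod /complete_graph /= eqxx andbF. Qed.

Lemma cart_prod_sym : symmetric eG -> symmetric P.
Proof.
move=> sym_eG [x i] [y j].
by rewrite /cart_prod /complete_graph /= sym_eG !(eq_sym x) !(eq_sym i).
Qed.

Definition layer B i : {set G} := [set g | (g, i) \in B].
Definition full_fibres B : {set G} := [set g | [forall i, (g, i) \in B]].

Lemma layer_setU1 B g i k :
  layer ((g, i) |: B) k = if k == i then g |: layer B k else layer B k.
Proof.
apply/setP => x; case: eqP => [-> | /eqP k_i]; rewrite !inE xpair_eqE ?eqxx ?andbT //.
by rewrite (negbTE k_i) andbF.
Qed.

Lemma full_fibres_subset B B' : B \subset B' -> full_fibres B \subset full_fibres B'.
Proof.
move=> sBB'; apply/subsetP => g; rewrite !inE => /forallP g_full.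
by apply/forallP => i; apply: (subsetP sBB').
Qed.

Lemma full_fibres_sub_layer B i : full_fibres B \subset layer B i.
Proof. by apply/subsetP => g; rewrite !inE => /forallP. Qed.

Lemma card_layers S : #|S| = \sum_(i < r) #|layer S i|.
Proof.
under eq_bigr => i _ do rewrite -sum1_card.
rewrite (exchange_big_dep xpredT) //= pair_big_dep -sum1_card.
by apply: eq_bigl => -[g i]; rewrite inE.
Qed.

Lemma white_connect_layer R B i x y :
  layer B i \subset R -> connect (white_rel eG R) x y -> connect (white_rel P B) (x, i) (y, i).
Proof.
move=> sBR; apply: (connect_homo (f := fun g => (g, i))) => a b /and3P [e_ab aR bR].
apply: connect1; rewrite /white_rel cart_prod_layer e_ab.
by rewrite -!(in_set (fun g => (g, i) \in B)) -/(layer B i) !(contra (subsetP sBR _)).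
Qed.

Lemma white_connect_proj D B x y :
  (forall g i, g \in D -> (g, i) \in B) ->
  connect (white_rel P B) x y -> connect (white_rel eG D) x.1 y.1.
Proof.
move=> sDB; apply: connect_homo => -[a i] [b j] /and3P [+ aB bB].
rewrite /cart_prod /= => /orP [/andP [/eqP -> _] | /andP [_ e_ab]]; first exact: connect0.
by apply: connect1; rewrite /white_rel e_ab (contra (sDB a i) aB) (contra (sDB b j) bB).
Qed.

Lemma psd_force_cart_prod B g i :
  psd_force P B (g, i) -> psd_force eG (layer B i) g \/ (forall j, j != i -> (g, j) \in B).
Proof.
case/andP=> giB /existsP [[h j] /and3P [hjB e_hj_gi /forallP hj_forces]].
have [j_i | j_i] := eqVneq j i.
  subst j; left; rewrite cart_prod_layer in e_hj_gi.
  apply/andP; split; first by rewrite inE.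
  apply/existsP; exists h; rewrite inE hjB e_hj_gi /=; apply/forallP => w.
  apply/implyP => /and3P [wB e_hw w_g]; move: (hj_forces (w, i)).
  rewrite -(in_set (fun g => (g, i) \in B)) wB cart_prod_layer e_hw.
  rewrite xpair_eqE (negbTE w_g) /=.
  by apply: contra; apply: white_connect_layer.
right; have h_g : h = g.
  by move: e_hj_gi; rewrite /cart_prod /complete_graph /= (negbTE j_i) andbT orbF; move/eqP.
subst h => k k_i; apply/negPn/negP => gkB.
have k_j : k != j by apply: contraNneq gkB => ->.
move: (hj_forces (g, k)); rewrite gkB /cart_prod /complete_graph /= eqxx eq_sym k_j.
rewrite xpair_eqE eqxx (negbTE k_i) /= => /negP; apply; apply: connect1.
by rewrite /white_rel /cart_prod /complete_graph /= eqxx k_i gkB giB.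
Qed.

Lemma psd_force_cart_prod_lift D B g i :
  (forall h j, h \in D -> (h, j) \in B) -> (g, i) \notin B ->
  psd_force eG D g -> psd_force P B (g, i).
Proof.
move=> sDB giB /andP [_ /existsP [h /and3P [hD e_hg /forallP h_forces]]].
apply/andP; split=> //; apply/existsP; exists (h, i).
rewrite sDB // cart_prod_layer e_hg /=; apply/forallP => -[w k].
apply/implyP => /and3P [wkB e_hi_wk wk_gi].
have k_i : k = i.
  move: e_hi_wk; rewrite /cart_prod /complete_graph /=; case: eqP => [h_w | _] /=.
    by subst w; rewrite sDB in wkB.
  by case/andP=> /eqP.
subst k; rewrite cart_prod_layer in e_hi_wk.
have wD : w \notin D by apply: contra wkB => /sDB.
have w_g : w != g by apply: contraNneq wk_gi => ->.
move: (h_forces w); rewrite wD e_hi_wk w_g /=; apply: contra.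
exact: (white_connect_proj (x := (w, i)) (y := (g, i))).
Qed.

Lemma psd_derives_cart_prod D B :
  psd_derives eG D -> (forall g i, g \in D -> (g, i) \in B) -> psd_derives P B.
Proof.
move=> dD; elim: dD B => [D' -> | D' g g_forced _ IH] B sDB.
  by apply: psd_done; apply/setP => -[h i]; rewrite !inE sDB ?inE.
apply: (psd_derives_forced (F := [set x | (x.1 == g) && (x \notin B)])).
  move=> [h i]; rewrite inE /= => /andP [/eqP -> giB].
  exact: psd_force_cart_prod_lift sDB giB g_forced.
apply: IH => h i; rewrite !inE; case: eqP => [-> _ | _ /= hD]; last by rewrite sDB.
by rewrite orbN.
Qed.

End CartesianProduct.

Section LowerBound.
Variables (G : finType) (eG : rel G) (r m : nat).
Hypothesis large_psd_forcing : forall D : {set G}, m < #|D| -> psd_derives eG D.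
Hypothesis critical_psd_forcing : forall (J : {set G}) g,
  #|J| = m -> g \in J -> psd_derives eG J \/ psd_force eG (J :\ g) g.
Local Notation P := (cart_prod eG (complete_graph r)).
Implicit Types (B S : {set G * 'I_r}) (I R : {set G}).

Definition redundant_over I g :=
  forall R, I \subset R -> psd_derives eG (g |: R) -> psd_derives eG R.

Lemma redundant_over_subset I I' g : I \subset I' -> redundant_over I g -> redundant_over I' g.
Proof. by move=> sII' g_red R sI'R; apply: g_red (subset_trans sII' sI'R). Qed.

Lemma redundant_over_forcing I g : psd_derives eG I -> redundant_over I g.
Proof. by move=> dI R sIR _; apply: psd_derives_superset dI. Qed.

Lemma redundant_over_forced I g : psd_force eG I g -> redundant_over I g.
Proof.
move=> g_forced R sIR dgR; have [gR | gR] := boolP (g \in R).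
  by rewrite (setUidPr _) ?sub1set in dgR.
exact: psd_step (psd_force_subset sIR gR g_forced) dgR.
Qed.

Definition fibre_budget I n := (psd_derives eG I -> n = 0) /\ n <= maxn 1 (m - #|I|).

Lemma fibre_budget_le I n n' : n' <= n -> fibre_budget I n -> fibre_budget I n'.
Proof. by move=> le_n'n [dI_n0 n_le]; split=> [/dI_n0|]; lia. Qed.

Lemma fibre_budget_subset I I' n : I \subset I' -> fibre_budget I' n -> fibre_budget I n.
Proof.
move=> sII' [dI'_n0 n_le]; have := subset_leq_card sII'; split; last by lia.
by move=> dI; apply: dI'_n0 (psd_derives_superset sII' dI).
Qed.

Lemma fibre_budget_add I g n :
  g \notin I -> ~ redundant_over I g -> fibre_budget (g |: I) n -> fibre_budget I n.+1.
Proof.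
move=> gI g_nred [dgI_n0 n_le]; have cardgI : #|g |: I| = #|I|.+1 by rewrite cardsU1 gI.
split=> [dI | ]; first by case: g_nred; apply: redundant_over_forcing.
have [lt_Im | le_mI] := ltnP #|I|.+1 m; first by rewrite cardgI in n_le; lia.
suff [/dgI_n0 -> | g_forced] : psd_derives eG (g |: I) \/ psd_force eG I g.
- exact: leq_maxl.
- by case: g_nred; apply: redundant_over_forced.
have [eq_mI | lt_mI] := eqVneq m #|I|.+1; last by left; apply: large_psd_forcing; lia.
have := critical_psd_forcing (etrans cardgI (esym eq_mI)) (setU11 g I).
by rewrite setU1K.
Qed.

Definition layer_completion B := exists U : 'I_r -> {set G},
  (forall i, psd_derives eG (layer B i :|: U i)) /\
  fibre_budget (full_fibres B) (\sum_(i < r) #|U i|).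

Lemma layer_completion_full : layer_completion [set: G * 'I_r].
Proof.
exists (fun=> set0); split=> [i | ].
  by apply: psd_done; apply/setP => g; rewrite !inE.
by rewrite big1 => [| i _]; [split | rewrite cards0].
Qed.

Lemma layer_completion_step B g i :
  psd_force P B (g, i) -> layer_completion ((g, i) |: B) -> layer_completion B.
Proof.
move=> gi_forced [U [dU budgetU]].
have giB := psd_force_notin gi_forced.
have layer_i : layer ((g, i) |: B) i = g |: layer B i by rewrite layer_setU1 eqxx.
have layer_k k : k != i -> layer ((g, i) |: B) k = layer B k.
  by move=> k_i; rewrite layer_setU1 (negbTE k_i).
have fibres_sub := full_fibres_subset (subsetUr [set (g, i)] B).
(* Either [g] can be dropped from layer [i], or the force runs along the fibre of [g],
   which becomes full, and [g] is charged to [U i]. *)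
have [g_red | g_nred] := classic (redundant_over (layer B i) g).
  exists U; split; last exact: fibre_budget_subset budgetU.
  move=> k; have [-> | k_i] := eqVneq k i; last by rewrite -layer_k.
  by apply: (g_red _ (subsetUl _ _)); rewrite setUA -layer_i.
have [g_forced | fibre_blue] := psd_force_cart_prod gi_forced.
  by case: g_nred; apply: redundant_over_forced.
have g_fibres : g \notin full_fibres B by rewrite inE negb_forall; apply/existsP; exists i.
have fibresE : full_fibres ((g, i) |: B) = g |: full_fibres B.
  apply/eqP; rewrite eqEsubset subUset sub1set fibres_sub andbT; apply/andP; split.
    apply/subsetP => x; rewrite !inE => /forallP x_full; case: eqVneq => //= x_g.
    by apply/forallP => k; move: (x_full k); rewrite !inE xpair_eqE (negbTE x_g).
  rewrite inE; apply/forallP => k; rewrite !inE.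
  by case: (eqVneq k i) => [-> | /fibre_blue ->]; rewrite ?eqxx ?orbT.
exists [eta U with i |-> g |: U i]; split.
  move=> k /=; have [-> | k_i] := eqVneq k i; last by rewrite -layer_k.
  by rewrite setUCA setUA -layer_i.
apply: (@fibre_budget_le _ (\sum_(k < r) #|U k|).+1); last first.
  apply: fibre_budget_add g_fibres _ _; last by rewrite -fibresE.
  by apply: contra_not g_nred; apply: redundant_over_subset (full_fibres_sub_layer B i).
rewrite (bigD1 i) //= eqxx [in X in _ <= X](bigD1 i) //= -addSn leq_add //.
  by rewrite cardsU1; case: (g \in U i).
by apply: eq_leq; apply: eq_bigr => k /negbTE ->.
Qed.

Lemma psd_derives_layer_completion S : psd_derives P S -> layer_completion S.
Proof.
elim=> [S' -> | S' [g i] gi_forced _]; first exact: layer_completion_full.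
exact: layer_completion_step.
Qed.

Theorem cart_prod_psd_lower_bound z S :
  (forall D : {set G}, psd_derives eG D -> z <= #|D|) ->
  psd_derives P S -> z * r <= #|S| + maxn 1 m.
Proof.
move=> z_min /psd_derives_layer_completion [U [dU [_ sumU_le]]].
apply: (@leq_trans (\sum_(i < r) (#|layer S i| + #|U i|))).
  rewrite -iter_addn_0 -big_const_ord; apply: leq_sum => i _.
  exact: leq_trans (z_min _ (dU i)) (leq_card_setU _ _).
by rewrite big_split /= -card_layers leq_add2l (leq_trans sumU_le) //; lia.
Qed.

End LowerBound.

Section UpperBound.
Variables (G : finType) (eG : rel G) (r : nat).
Hypothesis sym_eG : symmetric eG.
Local Notation P := (cart_prod eG (complete_graph r)).

Definition flipped_layer_set (T : {set G}) (i : 'I_r) : {set G * 'I_r} :=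
  [set x | (x.1 \in T) != (x.2 == i)].

Lemma psd_derives_flipped_layer_set T i j :
  psd_derives eG T -> j != i -> psd_derives P (flipped_layer_set T i).
Proof.
move=> dT j_i.
apply: (psd_derives_forced (F := [set x | (x.1 \in T) && (x.2 == i)])); last first.
  apply: psd_derives_cart_prod dT _ => g k gT.
  by rewrite !inE /= gT; case: (k == i).
move=> [t k]; rewrite inE /= => /andP [tT /eqP ->].
apply: (psd_force_closed (u := (t, j)) (C := [set x | x.2 == i])).
- exact: cart_prod_sym.
- by rewrite inE /= tT j_i.
- by rewrite /cart_prod /complete_graph /= eqxx j_i.
- by rewrite inE /= tT eqxx.
- by rewrite inE /= eqxx.
- move=> [a ka] [b kb]; rewrite !inE /= => /and3P [+ aS bS] ka_i.
  rewrite /cart_prod /complete_graph /= => /orP [/andP [/eqP a_b _] | /andP [/eqP <- _]] //.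
  by move: aS bS; rewrite !inE /= ka_i a_b; case: (b \in T); case: (kb == i).
- move=> [w l]; rewrite !inE /= => _.
  rewrite /cart_prod /complete_graph /= => /orP [/andP [/eqP <- j_l] | /andP [/eqP <- _]] //.
  by rewrite xpair_eqE eqxx /=; apply: contra => /eqP ->.
Qed.

Lemma card_flipped_layer_set T i : #|flipped_layer_set T i| = r.-1 * #|T| + #|~: T|.
Proof.
rewrite card_layers (bigD1 i) //= addnC; congr (_ + _).
  rewrite (eq_bigr (fun=> #|T|)) => [|k k_i].
    by rewrite sum_nat_const cardC1 card_ord.
  by apply: eq_card => g; rewrite !inE /=; case: eqP k_i => // _ _; case: (g \in T).
by apply: eq_card => g; rewrite !inE /= eqxx; case: (g \in T).
Qed.

End UpperBound.

(* Both 16-vertex graphs live on ['I_4 * 'I_4] (['Z_4] is convertible to ['I_4]).  The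
   functions below are run by [vm_compute], which evaluates every argument of [&&], [||]
   and [has] and is slow on the generic [==]: hence the [if]s, [has_lazy] and
   [vertex_eqb]. *)
Local Notation V := ('I_4 * 'I_4)%type.

Definition ords4 : seq 'I_4 :=
  [:: @Ordinal 4 0 isT; @Ordinal 4 1 isT; @Ordinal 4 2 isT; @Ordinal 4 3 isT].

Lemma ords4E : ords4 = enum 'I_4.
Proof. by apply: (inj_map val_inj); rewrite val_enum_ord. Qed.

Definition grid : seq V := [seq (a, b) | a <- ords4, b <- ords4].

Lemma mem_grid v : v \in grid.
Proof. by case: v => a b; apply: allpairs_f; rewrite ords4E mem_enum. Qed.

Lemma grid_uniq : uniq grid.
Proof. by vm_compute. Qed.

Definition gridset := seq (seq bool).
Definition gridmem (s : gridset) (v : V) : bool := nth false (nth [::] s v.1) v.2.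
Definition gridset_of (f : V -> bool) : gridset :=
  [seq [seq f (a, b) | b <- ords4] | a <- ords4].
Definition gridcard (s : gridset) : nat := count (gridmem s) grid.
Definition gset (s : gridset) : {set V} := [set v | gridmem s v].

Lemma nth_ords4 (a : 'I_4) : nth ord0 ords4 a = a.
Proof. by rewrite ords4E nth_ord_enum. Qed.

Lemma gridmem_of f v : gridmem (gridset_of f) v = f v.
Proof.
case: v => a b; rewrite /gridmem (nth_map ord0) ?size_map ?(nth_map ord0) //=.
by rewrite !nth_ords4.
Qed.

Lemma in_gset s v : (v \in gset s) = gridmem s v.
Proof. by rewrite inE. Qed.

Lemma gset_of f : gset (gridset_of f) = [set v | f v].
Proof. by apply/setP => v; rewrite !inE gridmem_of. Qed.

Lemma count_grid (P : {pred V}) : count P grid = #|P|.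
Proof.
have grid_enum : perm_eq grid (enum {: V}).
  by apply: uniq_perm grid_uniq (enum_uniq _) _ => v; rewrite mem_grid mem_enum.
by rewrite cardE /enum_mem size_filter -enumT; apply/(permP grid_enum).
Qed.

Lemma card_gset s : #|gset s| = gridcard s.
Proof. by rewrite /gridcard -count_grid; apply: eq_count => v; exact: in_gset. Qed.

Lemma gset_in (B : {set V}) : gset (gridset_of [in B]) = B.
Proof. by rewrite gset_of; apply/setP => v; rewrite inE. Qed.

Lemma gset_full s : gridcard s = 16 -> gset s = [set: V].
Proof.
by move=> full_s; apply/eqP; rewrite eqEcard subsetT cardsT card_prod card_ord card_gset full_s.
Qed.

Fixpoint all_bitseqs_card n k (p : bitseq -> bool) : bool :=
  if n is n'.+1 then
    if (if k is k'.+1 then all_bitseqs_card n' k' (fun s => p (true :: s)) else true)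
    then all_bitseqs_card n' k (fun s => p (false :: s)) else false
  else if k is 0 then p [::] else true.

Lemma all_bitseqs_cardP n k p s :
  all_bitseqs_card n k p -> size s = n -> count id s = k -> p s.
Proof.
elim: n k p s => [|n IH] k p [|b s] //=; first by move=> + _ k0; rewrite -k0.
move=> all_p [size_s]; case: b => /= count_s; move: all_p; first rewrite -count_s.
  by case: ifP => // p_true _; apply: IH p_true size_s _.
by case: ifP => // _ p_false; apply: IH p_false size_s count_s.
Qed.

Definition all_gridsets_card k (p : gridset -> bool) : bool :=
  all_bitseqs_card 16 k (fun s => p (reshape [:: 4; 4; 4; 4] s)).

Lemma count_flatten_gridset f : count id (flatten (gridset_of f)) = count f grid.
Proof. by rewrite count_flatten /grid /gridset_of count_flatten -!map_comp. Qed.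

Lemma all_gridsets_card_reshape k p s :
  all_gridsets_card k p -> size s = 16 -> count id s = k -> p (reshape [:: 4; 4; 4; 4] s).
Proof. exact: all_bitseqs_cardP. Qed.

Lemma all_gridsets_cardP k p :
  all_gridsets_card k p -> forall B : {set V}, #|B| = k -> p (gridset_of [in B]).
Proof.
move=> all_p B cardB; rewrite -[gridset_of _]flattenK.
apply: (all_gridsets_card_reshape all_p); first by rewrite size_flatten.
by rewrite count_flatten_gridset count_grid.
Qed.

Fixpoint has_lazy (T : Type) (p : pred T) (s : seq T) : bool :=
  if s is x :: s' then if p x then true else has_lazy p s' else false.

Lemma has_lazyE (T : Type) (p : pred T) s : has_lazy p s = has p s.
Proof. by elim: s => //= x s ->; case: (p x). Qed.

Definition vertex_eqb (v w : V) : bool := eqn v.1 w.1 && eqn v.2 w.2.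

Lemma vertex_eqbE v w : vertex_eqb v w = (v == w).
Proof. by case: v w => a b [c d]; rewrite /vertex_eqb !eqnE xpair_eqE !val_eqE. Qed.

Definition adj_table (e : rel V) : seq (seq (seq V)) :=
  [seq [seq [seq w <- grid | e (a, b) w] | b <- ords4] | a <- ords4].

Section GridPSD.
Variables (e : rel V) (tbl : seq (seq (seq V))).

Definition nbrs (v : V) : seq V := nth [::] (nth [::] tbl v.1) v.2.

Definition white_grow (B S : gridset) : gridset := gridset_of (fun v =>
  if gridmem S v then true else if gridmem B v then false else has (gridmem S) (nbrs v)).

Fixpoint white_fix n B S : gridset :=
  if n is n'.+1 then
    let S' := white_grow B S in if eqn (gridcard S') (gridcard S) then S else white_fix n' B S'
  else S.

Definition white_component B v : gridset := white_fix 16 B (gridset_of (vertex_eqb v)).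

Fixpoint white_components_from (vs : seq V) B (Cs : seq gridset) : seq gridset :=
  if vs is v :: vs' then
    if gridmem B v then white_components_from vs' B Cs
    else if has (gridmem^~ v) Cs then white_components_from vs' B Cs
    else white_components_from vs' B (white_component B v :: Cs)
  else Cs.

Definition white_components B : seq gridset := white_components_from grid B [::].

Definition white_closed B C : bool :=
  all (fun a => if gridmem C a then all (fun b => gridmem B b || gridmem C b) (nbrs a)
                else true) grid.

Definition forces_within B C v : bool :=
  if gridmem C v then
    has (fun u => if gridmem B u then
                    all (fun w => if gridmem B w then true else
                                  if vertex_eqb w v then true else ~~ gridmem C w) (nbrs u)
                  else false) (nbrs v)
  else false.

Definition closed_white_components B : seq gridset :=
  [seq C <- white_components B | white_closed B C].

Definition can_force_with Cs B v : bool :=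
  if gridmem B v then false else has (fun C => forces_within B C v) Cs.

Definition can_force B v : bool := can_force_with (closed_white_components B) B v.

Definition force_round B : gridset :=
  let Cs := closed_white_components B in
  gridset_of (fun v => if gridmem B v then true else can_force_with Cs B v).

Fixpoint force_hull n B : gridset :=
  if n is n'.+1 then
    let B' := force_round B in if eqn (gridcard B') (gridcard B) then B else force_hull n' B'
  else B.

Definition stalled B : bool :=
  all (fun C => all (fun v =>
         if gridmem C v then
           all (fun u => if gridmem B u then
                           has (fun w => if gridmem B w then false else
                                         if vertex_eqb w v then false else gridmem C w) (nbrs u)
                         else true) (nbrs v)
         else true) grid) (white_components B).

Definition stuck B : bool := ~~ eqn (gridcard B) 16 && stalled B.

Definition gridsubset (s A : gridset) : bool :=
  ~~ has_lazy (fun v => if gridmem s v then ~~ gridmem A v else false) grid.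

Hypotheses (sym_e : symmetric e) (nbrsE : forall v w, (w \in nbrs v) = e v w).
Implicit Types (B C S : gridset) (u v w : V).

Local Notation white B := (white_rel e (gset B)).

Lemma white_fix_ind (Q : gridset -> Prop) n B S :
  Q S -> (forall S, Q S -> Q (white_grow B S)) -> Q (white_fix n B S).
Proof. by move=> QS Q_grow; elim: n S QS => //= n IH S QS; case: ifP => // _; apply/IH/Q_grow. Qed.

Lemma white_component_self B v : gridmem (white_component B v) v.
Proof.
apply: (white_fix_ind (Q := fun S => gridmem S v)); first by rewrite gridmem_of vertex_eqbE.
by move=> S Sv; rewrite gridmem_of Sv.
Qed.

Lemma white_component_connect B v w :
  ~~ gridmem B v -> gridmem (white_component B v) w -> connect (white B) v w.
Proof.
move=> Bv Cw; suff /andP [] : ~~ gridmem B w && connect (white B) v w by [].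
move: w Cw; apply: (white_fix_ind (Q := fun S => forall w, gridmem S w ->
                      ~~ gridmem B w && connect (white B) v w)) => [x | S QS x].
  by rewrite gridmem_of vertex_eqbE => /eqP <-; rewrite Bv connect0.
rewrite gridmem_of; case: ifP => [/QS // | _]; case: ifP => // Bx /hasP [y yx Sy].
have /andP [By vy] := QS y Sy; apply: connect_trans vy (connect1 _).
by rewrite /white_rel !in_gset By Bx andbT sym_e -nbrsE.
Qed.

Lemma white_components_sub vs B Cs : {subset Cs <= white_components_from vs B Cs}.
Proof.
elim: vs Cs => [|x xs IH] Cs C CsC //=; case: ifP => _; first exact: IH.
by case: ifP => _; apply: IH; rewrite ?inE ?CsC ?orbT.
Qed.

Lemma white_components_cover B v : ~~ gridmem B v -> has (gridmem^~ v) (white_components B).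
Proof.
rewrite /white_components => Bv; move: (mem_grid v); elim: grid [::] => [|x xs IH] Cs //.
rewrite inE /= => /orP [/eqP <- | v_xs]; last by case: ifP => _; [|case: ifP => _]; apply: IH.
case: ifP => [Bv' | _]; first by rewrite Bv' in Bv.
case: ifP => [/hasP [C CsC Cv] | _]; apply/hasP.
  by exists C => //; apply: white_components_sub.
exists (white_component B v); last exact: white_component_self.
by apply: white_components_sub; rewrite inE eqxx.
Qed.

Lemma white_components_spec B C :
  C \in white_components B -> exists2 x, ~~ gridmem B x & C = white_component B x.
Proof.
pose Q C := exists2 x, ~~ gridmem B x & C = white_component B x.
suff spec vs Cs : {in Cs, forall C, Q C} -> {in white_components_from vs B Cs, forall C, Q C}.
  by apply: spec.
elim: vs Cs => [|x xs IH] Cs Cs_spec //=.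
case: ifP => Bx; first exact: IH.
case: ifP => _; apply: IH => // C'; rewrite inE => /orP [/eqP -> | /Cs_spec //].
by exists x; rewrite ?Bx.
Qed.

Lemma white_components_connect B C v w : C \in white_components B ->
  gridmem C v -> gridmem C w -> connect (white B) v w.
Proof.
move=> /white_components_spec [x Bx ->] /(white_component_connect Bx) xv.
move=> /(white_component_connect Bx); apply: connect_trans.
by rewrite (sym_connect_sym (white_rel_sym (gset B) sym_e)).
Qed.

Lemma white_closedP B C a b :
  white_closed B C -> white B a b -> a \in gset C -> b \in gset C.
Proof.
move=> /allP /(_ a (mem_grid a)) C_closed /and3P [e_ab _]; rewrite !inE => Bb Ca.
by move: C_closed; rewrite Ca => /allP /(_ b); rewrite nbrsE e_ab (negbTE Bb) => /(_ isT).
Qed.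

Lemma can_force_with_sound Cs B v : {in Cs, forall C, white_closed B C} ->
  can_force_with Cs B v -> psd_force e (gset B) v.
Proof.
move=> Cs_closed; rewrite /can_force_with; case: ifP => // Bv /hasP [C CsC].
rewrite /forces_within; case: ifP => // Cv /hasP [u vu].
case: ifP => // Bu /allP u_nbrs.
apply: (psd_force_closed (u := u) (C := gset C)) => //.
- by rewrite inE.
- by rewrite sym_e -nbrsE.
- by rewrite inE Bv.
- by rewrite inE.
- by move=> a b; apply: white_closedP (Cs_closed C CsC).
- move=> w; rewrite !inE -nbrsE => /negbTE Bw /u_nbrs; rewrite Bw vertex_eqbE.
  by move=> + /negbTE w_v; rewrite w_v.
Qed.

Lemma can_force_sound B v : can_force B v -> psd_force e (gset B) v.
Proof. by apply: can_force_with_sound => C; rewrite mem_filter => /andP []. Qed.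

Lemma stalled_sound B v : stalled B -> ~~ psd_force e (gset B) v.
Proof.
move=> B_stalled; apply/negP => /andP [Bv /existsP [u /and3P [Bu e_uv /forallP u_forces]]].
rewrite in_gset in Bv; rewrite in_gset in Bu.
have /hasP [C CsC Cv] := white_components_cover Bv.
move: B_stalled => /allP /(_ C CsC) /allP /(_ v (mem_grid v)); rewrite Cv.
move=> /allP /(_ u); rewrite nbrsE sym_e e_uv Bu => /(_ isT) /hasP [w uw].
case: ifP => // Bw; rewrite vertex_eqbE; case: eqP => // /eqP w_v Cw.
move: (u_forces w); rewrite in_gset Bw -nbrsE uw w_v /=.
by rewrite (white_components_connect CsC Cw Cv).
Qed.

Lemma gset_force_round B : gset (force_round B) = gset B :|: [set v | can_force B v].
Proof. by apply/setP => v; rewrite gset_of !inE; case: ifP. Qed.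

Lemma force_hull_sound n B : psd_derives e (gset (force_hull n B)) -> psd_derives e (gset B).
Proof.
elim: n B => //= n IH B; case: ifP => // _ /IH; rewrite gset_force_round.
by apply: psd_derives_forced => v; rewrite inE; apply: can_force_sound.
Qed.

Lemma force_hull_subset n B : gset B \subset gset (force_hull n B).
Proof.
elim: n B => //= n IH B; case: ifP => // _; apply: subset_trans (IH _).
by rewrite gset_force_round subsetUl.
Qed.

Lemma gridsubset_sub s A : gridsubset s A -> gset s \subset gset A.
Proof.
rewrite /gridsubset has_lazyE => /hasPn sA; apply/subsetP => v; rewrite !in_gset => sv.
by move: (sA v (mem_grid v)); rewrite sv negbK.
Qed.

Lemma psd_derives_not_stuck (B : {set V}) A : psd_derives e B -> B \subset gset A -> ~~ stuck A.
Proof.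
move=> dB sBA; apply/negP => /andP [/eqnP A_not_full A_stalled]; apply: A_not_full.
rewrite -card_gset (psd_derives_stalled dB sBA) => [|v]; last exact: stalled_sound.
by rewrite cardsT card_prod card_ord.
Qed.

Definition blocked_within L s : bool := if has_lazy (gridsubset s) L then true else stuck s.

Definition hull_full s : bool := eqn (gridcard (force_hull 16 s)) 16.

Definition critical_ok s : bool :=
  if hull_full s then true else
  all (fun x => if gridmem s x then
                  can_force (gridset_of (fun v => if gridmem s v then ~~ vertex_eqb v x
                                                  else false)) x
                else true) grid.

Lemma psd_derives_hull_full s : hull_full s -> psd_derives e (gset s).
Proof. by move=> /eqnP /gset_full full; apply: (@force_hull_sound 16); apply: psd_done. Qed.

Lemma psd_forcing_card_gt k L :
  k <= 16 -> all stuck L -> all_gridsets_card k (blocked_within L) ->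
  forall B : {set V}, psd_derives e B -> k < #|B|.
Proof.
move=> k_le /allP L_stuck check B dB; rewrite ltnNge; apply/negP => B_le.
have [B' sBB' cardB'] : exists2 B' : {set V}, B \subset B' & #|B'| = k.
  by apply: subset_card_extend; rewrite B_le card_prod card_ord.
have dB' := psd_derives_superset sBB' dB.
move: (all_gridsets_cardP check cardB'); rewrite /blocked_within has_lazyE.
case: ifP => [/hasP [A AL sA] _ | _].
  apply/negP: (L_stuck A AL); apply: psd_derives_not_stuck dB' _.
  by apply: subset_trans (gridsubset_sub sA); rewrite gset_in.
by apply/negP; apply: psd_derives_not_stuck dB' _; rewrite gset_in.
Qed.

Lemma psd_derives_card_ge k :
  all (fun j => all_gridsets_card j hull_full) (iota k (17 - k)) ->
  forall D : {set V}, k <= #|D| -> psd_derives e D.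
Proof.
move=> /allP check D D_ge; rewrite -(gset_in D); apply: psd_derives_hull_full.
apply: (all_gridsets_cardP (check #|D| _)) => //.
have := subset_leq_card (subsetT D); rewrite cardsT card_prod card_ord mem_iota D_ge /=; lia.
Qed.

Lemma psd_critical_card k : all_gridsets_card k critical_ok ->
  forall (J : {set V}) g, #|J| = k -> g \in J -> psd_derives e J \/ psd_force e (J :\ g) g.
Proof.
move=> check J g cardJ gJ; move: (all_gridsets_cardP check cardJ); rewrite /critical_ok.
case: ifP => [dJ _ | _ /allP /(_ g (mem_grid g))].
  by left; rewrite -(gset_in J); apply: psd_derives_hull_full.
rewrite gridmem_of gJ => /can_force_sound; right.
suff <- : gset (gridset_of (fun v => if gridmem (gridset_of [in J]) v
                                       then ~~ vertex_eqb v g else false)) = J :\ g by [].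
apply/setP => v; rewrite gset_of !inE gridmem_of vertex_eqbE.
by case: (v \in J); rewrite ?andbT ?andbF.
Qed.

End GridPSD.

Lemma nbrs_adj_table (e : rel V) v w : (w \in nbrs (adj_table e) v) = e v w.
Proof.
case: v => a b; rewrite /nbrs !(nth_map ord0) ?size_map ?ltn_ord //.
by rewrite !nth_ords4 mem_filter mem_grid andbT.
Qed.

Definition rook44_table := Eval vm_compute in adj_table rook44.
Definition shrikhande_table := Eval vm_compute in adj_table shrikhande.

Lemma rook44_nbrs v w : (w \in nbrs rook44_table v) = rook44 v w.
Proof. by rewrite -nbrs_adj_table; congr (_ \in nbrs _ _); vm_compute. Qed.

Lemma shrikhande_nbrs v w : (w \in nbrs shrikhande_table v) = shrikhande v w.
Proof. by rewrite -nbrs_adj_table; congr (_ \in nbrs _ _); vm_compute. Qed.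

Lemma rook44_sym : symmetric rook44.
Proof. by apply: cart_prod_sym => x y; rewrite /complete_graph eq_sym. Qed.

Lemma shrikhande_sym : symmetric shrikhande.
Proof.
move=> v w; have /allP /(_ v (mem_grid v)) /allP /(_ w (mem_grid w)) /eqP // :
  all (fun v => all (fun w => shrikhande v w == shrikhande w v) grid) grid.
by vm_compute.
Qed.

(* Complements of the forts {a, a'} × {b, b'} and (R × C) minus a transversal, |R| = |C| = 3:
   every 9-set of K_4 □ K_4 lies in one of them or is itself stuck. *)
Definition rook44_blockers : seq gridset := Eval vm_compute in
  let pairs : seq (seq 'I_4) :=
    [seq [:: a; b] | a : 'I_4 <- ords4, b <- [seq b : 'I_4 <- ords4 | a < b]] in
  let triples : seq (seq 'I_4) := [seq [seq b <- ords4 | b != a] | a <- ords4] in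
  [seq gridset_of (fun v => ~~ ((v.1 \in R) && (v.2 \in C))) | R <- pairs, C <- pairs] ++
  [seq gridset_of (fun v => ~~ [&& v.1 \in R, v.2 \in CD.1 & v \notin zip R CD.2])
  | R <- triples, CD <- [seq (C, D) | C <- triples, D <- permutations C]].

Lemma rook44_forcing_card_gt9 (B : {set 'I_4 * 'I_4}) : psd_derives rook44 B -> 9 < #|B|.
Proof.
apply: (psd_forcing_card_gt rook44_sym rook44_nbrs (isT : 9 <= 16) (L := rook44_blockers)).
  by vm_compute.
by vm_compute.
Qed.

Lemma rook44_derives_card_gt12 (D : {set 'I_4 * 'I_4}) : 12 < #|D| -> psd_derives rook44 D.
Proof.
apply: (psd_derives_card_ge rook44_sym rook44_nbrs).
by vm_compute.
Qed.

Lemma rook44_critical_card12 (J : {set 'I_4 * 'I_4}) g :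
  #|J| = 12 -> g \in J -> psd_derives rook44 J \/ psd_force rook44 (J :\ g) g.
Proof.
apply: (psd_critical_card rook44_sym rook44_nbrs).
by vm_compute.
Qed.

Definition shrikhande_seed : gridset :=
  [:: [:: true; true; true; true]; [:: true; true; true; false];
      [:: true; false; false; false]; [:: true; false; false; false]].

Lemma shrikhande_forcing_set9 : exists2 T : {set 'Z_4 * 'Z_4}, psd_derives shrikhande T & #|T| = 9.
Proof.
exists (gset shrikhande_seed); last by rewrite card_gset.
by apply: (psd_derives_hull_full shrikhande_sym shrikhande_nbrs); vm_compute.
Qed.

Theorem proposition3p5 (r : nat) (hr : 11 <= r) (k1 k2 : nat) :
  is_Zplus (cart_prod rook44 (complete_graph r)) k1 ->
  is_Zplus (cart_prod shrikhande (complete_graph r)) k2 ->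
  k1 <> k2.
Proof.
move=> [[S1 [dS1 cardS1]] _] [_ Zplus_min].
have lower : 10 * r <= k1 + maxn 1 12.
  rewrite -cardS1; apply: (cart_prod_psd_lower_bound rook44_derives_card_gt12
                             rook44_critical_card12 rook44_forcing_card_gt9).
  exact: dS1.
have [T dT cardT] := shrikhande_forcing_set9.
have r_gt1 : 1 < r by lia.
have layers_01 : Ordinal (ltnW r_gt1) != Ordinal r_gt1 by [].
have cardCT : #|~: T| = 7.
  by apply/eqP; rewrite -(eqn_add2l 9) -{1}cardT cardsC card_prod card_ord.
have := Zplus_min _ (psd_derives_flipped_layer_set shrikhande_sym dT layers_01).
rewrite card_flipped_layer_set cardT cardCT; lia.
Qed.
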